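(* Let $G$ be a graph and $r>2$ an integer. Then $$\rho_o(G)\leq \rho_o(G\square K_r)\leq \alpha_2(G).$$ Moreover, if $G$ is triangle-free and there is an $\alpha_2(G)$-set $S$ with $\chi(G/S)\leq r$, then $\rho_o(G\square K_r)=\alpha_2(G)$.
   Context: All graphs are finite and simple. An open packing of $G$ is a set $P\subseteq V(G)$ whose vertices have pairwise disjoint open neighborhoods; $\rho_o(G)$ is the maximum size of an open packing. A set $S\subseteq V(G)$ is $2$-independent if the induced subgraph $G[S]$ has maximum degree less than $2$ (i.e., $G[S]$ consists of isolated vertices and isolated edges); $\alpha_2(G)$ is the maximum size of a $2$-independent set, and an $\alpha_2(G)$-set is a $2$-independent set of that size. For a $2$-independent set $S$, the graph $G/S$ has as vertices the connected components of $G[S]$, two components $C,C'$ being adjacent iff $d_G(C,C')=2$, where $d_G(C,C')=\min\{d_G(x,y): x\in V(C), y\in V(C')\}$. $\chi$ denotes chromatic number, $K_r$ the complete graph on $r$ vertices. The Cartesian product $G\square H$ has vertex set $V(G)\times V(H)$, with $(g,h)$ adjacent to $(g',h')$ iff ($gg'\in E(G)$ and $h=h'$) or ($g=g'$ and $hh'\in E(H)$). *)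

(* Simple graphs = symmetric irreflexive relations on a finType. *)
From mathcomp Require Import all_boot.
Set Implicit Arguments. Unset Strict Implicit. Unset Printing Implicit Defensive.

Section Defs.
Variable V : finType.
Variable e : rel V.

Definition nbh (x : V) : {set V} := [set y | e x y].

Definition open_packing (P : {set V}) : bool :=
  [forall x in P, forall y in P, (x != y) ==> [disjoint nbh x & nbh y]].

Definition rho_o : nat := \max_(P : {set V} | open_packing P) #|P|.

Definition two_indep (S : {set V}) : bool :=
  [forall x in S, #|[set y in S | e x y]| < 2].

Definition alpha2 : nat := \max_(S : {set V} | two_indep S) #|S|.

Definition alpha2_set (S : {set V}) : bool := two_indep S && (#|S| == alpha2).

Definition triangle_free : Prop :=
  forall x y z : V, ~ [&& e x y, e y z & e x z].

Definition dist_le1 (x y : V) : bool := (x == y) || e x y.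
Definition dist_eq2 (x y : V) : bool :=
  ~~ dist_le1 x y && [exists z, e x z && e z y].

(* d_G(C,C') = 2 for vertex sets C, C' (minimum distance over pairs equals 2) *)
Definition setdist_eq2 (C C' : {set V}) : bool :=
  [forall x in C, forall y in C', ~~ dist_le1 x y] &&
  [exists x in C, exists y in C', dist_eq2 x y].

Definition indrel (S : {set V}) : rel V := fun a b => [&& a \in S, b \in S & e a b].
Definition comp (S : {set V}) (x : V) : {set V} :=
  [set y in S | connect (indrel S) x y].
Definition comps (S : {set V}) : {set {set V}} := [set comp S x | x in S].

(* adjacency of the graph G/S on the vertex set comps S *)
Definition quot_adj (S : {set V}) : rel {set V} :=
  fun C C' => (C != C') && setdist_eq2 C C'.

Definition cartK (r : nat) : rel (V * 'I_r) :=
  fun u v => (e u.1 v.1 && (u.2 == v.2)) || ((u.1 == v.1) && (u.2 != v.2)).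
End Defs.
Arguments cartK {V} e r _ _.

Section Chi.
Variable W : finType.
(* proper k-colouring of the graph (A, f) with A : {set W} the vertex set *)
Definition colorable (A : {set W}) (f : rel W) (k : nat) : bool :=
  [exists c : {ffun W -> 'I_k},
    [forall x in A, forall y in A, f x y ==> (c x != c y)]].
(* chromatic number: least k with a proper k-colouring (k = #|W| always works) *)
Definition chi (A : {set W}) (f : rel W) : nat :=
  \big[minn/#|W|]_(k < #|W|.+1 | colorable A f k) k.
End Chi.

From Pilot Require Import Defs.
From mathcomp Require Import all_boot.

Set Implicit Arguments.
Unset Strict Implicit.
Unset Printing Implicit Defensive.

(* Lower bound: a packing of G placed in one layer of G [] K_r is a packing.
   Upper bound: two vertices of a packing of G [] K_r never share a G-coordinate
   (for r > 2 a third layer supplies a common neighbour), and neighbours in G of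
   the G-coordinate of a packing vertex lie in the same layer, so the projection
   to G is 2-independent and of the same size.
   Equality: the components of an alpha_2-set S have at most two vertices; put
   each component into the layer given by a proper r-colouring of G/S.  Two
   vertices of S at distance 2 then lie in different layers, and with no
   triangles this leaves no common neighbour. *)

Section OpenPacking.
Variables (T : finType) (e : rel T).

Lemma open_packing_commonP (P : {set T}) :
  reflect {in P &, forall x y z, e x z -> e y z -> x = y} (open_packing e P).
Proof.
apply: (iffP forall_inP) => [hP x y xP yP z exz eyz | hP x xP].
  apply/eqP/negPn/negP => xy.
  have D := implyP (forall_inP (hP x xP) y yP) xy.
  by have := @disjointFr _ _ _ z D; rewrite !inE exz eyz => /(_ isT).
apply/forall_inP => y yP; apply/implyP => xy.
rewrite -setI_eq0; apply/eqP/setP => z; rewrite !inE.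
apply/negbTE/andP => -[exz eyz].
by rewrite (hP x y xP yP z exz eyz) eqxx in xy.
Qed.

Lemma leq_rho_o (P : {set T}) : open_packing e P -> #|P| <= rho_o e.
Proof. exact: leq_bigmax_cond. Qed.

Lemma leq_alpha2 (S : {set T}) : two_indep e S -> #|S| <= alpha2 e.
Proof. exact: leq_bigmax_cond. Qed.

End OpenPacking.

Section CartesianK.
Variables (T : finType) (e : rel T) (r : nat).

Lemma open_packing_layer (P : {set T}) (i : 'I_r) :
  open_packing e P -> open_packing (cartK e r) [set (x, i) | x in P].
Proof.
move=> /open_packing_commonP hP; apply/open_packing_commonP.
move=> _ _ /imsetP [x xP ->] /imsetP [y yP ->] [z t].
rewrite /cartK /= => /orP [/andP [exz /eqP <-] | /andP [/eqP <- ti]].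
  by rewrite eqxx andbT andbF orbF => /(hP x y xP yP z exz) ->.
by rewrite (negbTE ti) andbF andbT /= => /eqP ->.
Qed.

Lemma open_packing_cartK_fst_inj (P : {set T * 'I_r}) :
  2 < r -> open_packing (cartK e r) P -> {in P &, injective fst}.
Proof.
move=> hr /open_packing_commonP hP u v uP vP uv1.
have /properP [_ [k _ k_new]] : [set u.2; v.2] \proper [set: 'I_r].
  rewrite properT; apply: contraTneq hr => full.
  by rewrite -leqNgt -[r]card_ord -cardsT -full cards2; case: (_ != _).
move: k_new; rewrite !inE negb_or => /andP [ku kv].
by apply: (hP u v uP vP (u.1, k)); rewrite /cartK /= ?uv1 eqxx eq_sym ?ku ?kv orbT.
Qed.

Hypotheses (esym : symmetric e) (eirr : irreflexive e).

Lemma open_packing_cartK_edge_layer (P : {set T * 'I_r}) u v :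
  open_packing (cartK e r) P -> u \in P -> v \in P -> e u.1 v.1 -> u.2 = v.2.
Proof.
move=> /open_packing_commonP hP uP vP euv; apply/eqP/negPn/negP => uv2.
have u_eq_v : u = v.
  by apply: (hP u v uP vP (u.1, v.2)); rewrite /cartK /= ?eqxx ?uv2 ?orbT // esym euv.
by rewrite u_eq_v eirr in euv.
Qed.

Lemma open_packing_cartK_two_indep (P : {set T * 'I_r}) :
  open_packing (cartK e r) P -> two_indep e (fst @: P).
Proof.
move=> hP; apply/forall_inP => _ /imsetP [u uP ->]; rewrite ltnNge.
apply/negP => /card_gt1P [y [z [yN zN]]]; apply/negP; rewrite negbK.
move: yN zN; rewrite !inE => /andP [/imsetP [v vP ->] euv] /andP [/imsetP [w wP ->] euw].
apply/eqP; congr (_.1).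
have /open_packing_commonP common := hP.
apply: (common v w vP wP u); rewrite /cartK /=.
  by rewrite (open_packing_cartK_edge_layer hP uP vP euv) esym euv eqxx.
by rewrite (open_packing_cartK_edge_layer hP uP wP euw) esym euw eqxx.
Qed.

Lemma rho_o_leq_cartK : 0 < r -> rho_o e <= rho_o (cartK e r).
Proof.
move=> r_gt0; apply/bigmax_leqP => P hP.
rewrite -(card_in_imset (f := fun x => (x, Ordinal r_gt0))); last by move=> ? ? _ _ [].
exact/leq_rho_o/open_packing_layer.
Qed.

Lemma rho_o_cartK_leq_alpha2 : 2 < r -> rho_o (cartK e r) <= alpha2 e.
Proof.
move=> hr; apply/bigmax_leqP => P hP.
rewrite -(card_in_imset (open_packing_cartK_fst_inj hr hP)).
exact/leq_alpha2/open_packing_cartK_two_indep.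
Qed.

End CartesianK.

Section Coloring.
Variable W : finType.

Lemma colorableP (A : {set W}) (f : rel W) k :
  reflect (exists c : {ffun W -> 'I_k}, {in A &, forall x y, f x y -> c x != c y})
    (colorable A f k).
Proof.
apply: (iffP existsP) => -[c hc]; exists c.
  by move=> x y xA yA; apply/implyP; apply: (forall_inP (forall_inP hc x xA) y yA).
by apply/forall_inP => x xA; apply/forall_inP => y yA; apply/implyP; apply: hc.
Qed.

Lemma colorable_widen (A : {set W}) (f : rel W) k k' :
  k <= k' -> colorable A f k -> colorable A f k'.
Proof.
move=> kk' /colorableP [c hc]; apply/colorableP.
exists [ffun x => widen_ord kk' (c x)] => x y xA yA fxy.
by rewrite !ffunE -val_eqE /= val_eqE hc.
Qed.

Lemma colorable_chi (A : {set W}) (f : rel W) :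
  irreflexive f -> colorable A f (chi A f).
Proof.
move=> firr; apply: (big_ind (colorable A f)) => [|k k' ? ?|//].
- apply/colorableP; exists [ffun x => enum_rank x] => x y _ _ fxy.
  rewrite !ffunE (inj_eq enum_rank_inj); apply: contraTneq fxy => ->.
  by rewrite firr.
- by rewrite /minn; case: ifP.
Qed.

End Coloring.

Local Notation comp := Defs.comp.

Section Components.
Variables (T : finType) (e : rel T) (S : {set T}).
Hypotheses (esym : symmetric e) (hS : two_indep e S).

Lemma two_indep_nbr_uniq x y z :
  x \in S -> y \in S -> z \in S -> e x y -> e x z -> y = z.
Proof.
move=> xS yS zS exy exz; apply/eqP/negPn/negP => yz.
have := forall_inP hS x xS; rewrite ltnNge => /negP; apply.
by apply/card_gt1P; exists y, z; rewrite !inE yS zS exy exz.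
Qed.

Lemma comp_connect x y : connect (indrel e S) x y -> comp e S x = comp e S y.
Proof.
have indrel_sym : symmetric (indrel e S) by move=> a b; rewrite /indrel esym andbCA.
move=> cxy; apply/setP => w; rewrite !inE.
by rewrite (same_connect (sym_connect_sym indrel_sym) cxy).
Qed.

Lemma comp_edge x y : x \in S -> y \in S -> e x y -> comp e S x = comp e S y.
Proof. by move=> xS yS exy; apply/comp_connect/connect1; rewrite /indrel xS yS exy. Qed.

Lemma comp_sub_nbh x : x \in S -> comp e S x \subset x |: nbh e x.
Proof.
move=> xS; apply/subsetP => y; rewrite !inE => /andP [_ cxy].
suff closed_nbh : closed (indrel e S) [pred z | (z == x) || e x z].
  by have := closed_connect closed_nbh cxy; rewrite !inE eqxx => <-.
(* A neighbour of x in S has no neighbour in S other than x. *)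
have step a b : indrel e S a b -> (a == x) || e x a -> (b == x) || e x b.
  case/and3P => aS bS eab /orP [/eqP ax | exa]; first by rewrite -ax eab orbT.
  by rewrite (two_indep_nbr_uniq aS bS xS eab) ?eqxx // esym.
move=> a b ab /=; apply/idP/idP; first exact: step.
by apply: step; rewrite /indrel andbCA -esym -/(indrel e S a b).
Qed.

Lemma eq_comp_dist_le1 x y :
  x \in S -> y \in S -> comp e S x = comp e S y -> dist_le1 e x y.
Proof.
move=> xS yS cxy; have /subsetP /(_ y) := comp_sub_nbh xS.
by rewrite cxy !inE yS connect0 eq_sym => /(_ isT).
Qed.

Lemma quot_adj_comp x y : x \in S -> y \in S ->
  dist_eq2 e x y -> quot_adj e S (comp e S x) (comp e S y).
Proof.
move=> xS yS xy2; have /andP [xy_far _] := xy2.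
have comp_neq : comp e S x != comp e S y.
  by apply: contra xy_far => /eqP /(eq_comp_dist_le1 xS yS).
rewrite /quot_adj comp_neq /setdist_eq2 /=; apply/andP; split.
  apply/forall_inP => p; rewrite inE => /andP [pS /comp_connect cxp].
  apply/forall_inP => q; rewrite inE => /andP [qS /comp_connect cyq].
  apply: contra comp_neq => /orP [/eqP pq | epq]; rewrite cxp cyq ?pq //.
  by rewrite (comp_edge pS qS epq).
apply/exists_inP; exists x; first by rewrite inE xS connect0.
by apply/exists_inP; exists y; first by rewrite inE yS connect0.
Qed.

Lemma open_packing_color_layers r (c : {ffun {set T} -> 'I_r}) :
  triangle_free e ->
  {in comps e S &, forall C C', quot_adj e S C C' -> c C != c C'} ->
  open_packing (cartK e r) [set (x, c (comp e S x)) | x in S].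
Proof.
move=> tf c_proper; apply/open_packing_commonP.
move=> _ _ /imsetP [x xS ->] /imsetP [y yS ->] [z t].
rewrite /cartK /= => hx hy; suff xy : x = y by rewrite xy.
have compS w : w \in S -> comp e S w \in comps e S by move=> wS; apply: imset_f.
have same_color w w' : w \in S -> w' \in S -> e w w' -> c (comp e S w) = c (comp e S w').
  by move=> wS w'S eww'; rewrite (comp_edge wS w'S eww').
case/orP: hx => [/andP [exz /eqP xt] | /andP [/eqP xz xt]];
  case/orP: hy => [/andP [eyz /eqP yt] | /andP [/eqP yz yt]].
- apply/eqP/contraT => xy; case exy: (e x y).
    by case: (tf x y z); rewrite exy exz eyz.
  have xy2 : dist_eq2 e x y.
    rewrite /dist_eq2 /dist_le1 negb_or xy exy /=.
    by apply/existsP; exists z; rewrite exz esym eyz.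
  have := c_proper _ _ (compS x xS) (compS y yS) (quot_adj_comp xS yS xy2).
  by rewrite xt yt eqxx.
- by rewrite -yz in exz; rewrite -xt (same_color x y xS yS exz) eqxx in yt.
- by rewrite -xz in eyz; rewrite -yt (same_color y x yS xS eyz) eqxx in xt.
- by rewrite xz yz.
Qed.

End Components.

Theorem mainTheorem6 (T : finType) (e : rel T)
  (esym : symmetric e) (eirr : irreflexive e) (r : nat) (hr : 2 < r) :
  rho_o e <= rho_o (cartK e r) <= alpha2 e /\
  (triangle_free e ->
   (exists S : {set T}, alpha2_set e S /\ chi (comps e S) (quot_adj e S) <= r) ->
   rho_o (cartK e r) = alpha2 e).
Proof.
have rho_cartK_le := rho_o_cartK_leq_alpha2 esym eirr hr.
split; first by rewrite rho_o_leq_cartK ?rho_cartK_le // (ltn_trans _ hr).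
move=> tf [S [/andP [hS /eqP hcard] chi_le]].
have /colorableP [c c_proper] : colorable (comps e S) (quot_adj e S) r.
  by apply: colorable_widen chi_le _; apply: colorable_chi => C; rewrite /quot_adj eqxx.
apply/anti_leq; rewrite rho_cartK_le -hcard /=.
rewrite -(card_in_imset (f := fun x => (x, c (comp e S x)))); last by move=> ? ? _ _ [].
exact/leq_rho_o/open_packing_color_layers.
Qed.
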